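(* There exist $U<0$ and constants $0<c\le C$ such that the following holds for every $u_0<U$, every $s\in[0,1]$, and every smooth function $\phi$ on $\overline{\Omega_{u_0}}$ (up to $\mathscr I^+$): $$c\,I_s(\phi)\le\mathcal E_{\mathcal H_{s,u_0}}(\phi)\le C\,I_s(\phi),$$ where $$I_s(\phi)=\int_{]-\infty,u_0[\times S^2}\Big(u^2(\partial_u\phi)^2+\frac{R}{|u|}(\partial_R\phi)^2+|\nabla_{S^2}\phi|^2\Big)\,du\,d^2\omega,$$ the integrand being evaluated on $\mathcal H_{s,u_0}$. For $s=0$ the two quantities coincide, i.e. $\mathcal E_{\mathscr I^+_{u_0}}(\phi)=\int_{]-\infty,u_0[\times S^2}\big(u^2(\partial_u\phi)^2+|\nabla_{S^2}\phi|^2\big)\,du\,d^2\omega$.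
   Context: Fix $M>0$. On the extreme Reissner–Nordström exterior, use the outgoing chart $(u,R,\omega)$, where: - $R=1/r$, $u=t-r_*$, $r_*=r-M+2M\log\frac{r-M}{M}-\frac{M^2}{r-M}$; - the rescaled metric is $\hat g=R^2(1-MR)^2du^2-2\,du\,dR-d\omega^2$, extending to $\mathscr I^+=\{R=0\}$; - $\partial_t$ is future-directed; - $d^2\omega$ denotes the area form of the unit sphere, $\nabla_{S^2}$ its gradient. Regions, for $u_0<0$: - $\Omega_{u_0}=\{t\ge0\}\cap\{u<u_0\}$; - for $0<s\le1$, $\mathcal H_{s,u_0}=\{u=-sr_*\}\cap\{u<u_0\}$, so that $\mathcal H_{1,u_0}=\{t=0\}\cap\{u<u_0\}$; - $\mathcal H_{0,u_0}=\mathscr I^+_{u_0}=\{R=0,\ u<u_0\}$. Each $\mathcal H_{s,u_0}$ is parametrised by $(u,\omega)\in]-\infty,u_0[\times S^2$. Energy flux. Let $T_{ab}(\phi)=\hat\nabla_a\phi\,\hat\nabla_b\phi-\frac12\hat g^{cd}\hat\nabla_c\phi\hat\nabla_d\phi\,\hat g_{ab}$. Let $K=u^2\partial_u-2(1+uR)\partial_R$ be the Morawetz vector field and $J_a(\phi)=K^bT_{ab}(\phi)$. For a spacelike or null hypersurface $\Sigma$, define $$\mathcal E_\Sigma(\phi)=\int_\Sigma J_a(\phi)\tilde n^a\,d\mu,$$ where: - $\tilde n$ is a future-directed normal to $\Sigma$; - $\tilde l$ is transverse to $\Sigma$ with $\hat g(\tilde l,\tilde n)=1$; - $d\mu$ is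 the positive measure induced on $\Sigma$ by $\tilde l\lrcorner(du\wedge dR\wedge d^2\omega)$. This definition is independent of the choice of $\tilde n$ and $\tilde l$. Explicitly, for $0<s\le1$, the integrand being evaluated on $\mathcal H_{s,u_0}$: $$\mathcal E_{\mathcal H_{s,u_0}}(\phi)=\int_{]-\infty,u_0[\times S^2}\Big(R^2(1-MR)^2u^2\,\partial_u\phi\,\partial_R\phi+u^2(\partial_u\phi)^2$$ $$+\frac{R^2(1-MR)^2}{2s}\big((Ru)^2(1-MR)^2+2(2-s)Ru+2(2-s)\big)(\partial_R\phi)^2$$ $$+\Big(Ru+\frac{(Ru)^2(1-MR)^2}{2s}+1\Big)|\nabla_{S^2}\phi|^2\Big)\,du\,d^2\omega.$$ *)

From HB Require Import structures.
From mathcomp Require Import all_boot all_order all_algebra.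
From mathcomp Require Import all_classical all_reals all_analysis.
Set Implicit Arguments. Unset Strict Implicit. Unset Printing Implicit Defensive.
Import Order.TTheory GRing.Theory Num.Theory.
Import numFieldNormedType.Exports.
Local Open Scope classical_set_scope.
Local Open Scope ring_scope.

Section ERN.
Variable R : realType.
Implicit Types (M u s r x a b c : R).

(* Tortoise coordinate of extreme Reissner-Nordstrom, r > M. *)
Definition rstar M r : R :=
  r - M + 2 * M * ln ((r - M) / M) - M ^+ 2 / (r - M).

(* Coordinates on (u,R,omega)-space: omega in S^2 is embedded in R^3, and a point
   is the row vector (u, R, x1, x2, x3) in 'rV_5. *)
Definition pt5 u x a b c : 'rV[R]_5 := \row_(i < 5) nth 0 [:: u; x; a; b; c] i.
Definition e5 (i : 'I_5) : 'rV[R]_5 := delta_mx 0 i.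

Definition dpart (i : nat) (f : 'rV[R]_5 -> R) (p : 'rV[R]_5) : R :=
  'D_(e5 (inord i)) f p.
Definition d_u f p := dpart 0 f p.
Definition d_R f p := dpart 1 f p.

(* |grad_{S^2} phi|^2 at a point whose sphere component (a,b,c) is a unit vector:
   squared norm of the tangential part of the R^3-gradient. *)
Definition gradS2sq (f : 'rV[R]_5 -> R) (p : 'rV[R]_5) : R :=
  let g2 := dpart 2 f p in let g3 := dpart 3 f p in let g4 := dpart 4 f p in
  g2 ^+ 2 + g3 ^+ 2 + g4 ^+ 2
  - (p ord0 (inord 2) * g2 + p ord0 (inord 3) * g3 + p ord0 (inord 4) * g4) ^+ 2.

Definition iterD (vs : seq 'rV[R]_5) (f : 'rV[R]_5 -> R) : 'rV[R]_5 -> R :=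
  foldr (fun (v : 'rV[R]_5) (g : 'rV[R]_5 -> R) (y : 'rV[R]_5) => derive g y v) f vs.
Definition smooth_on (W : set 'rV[R]_5) (f : 'rV[R]_5 -> R) : Prop :=
  forall (vs : seq 'rV[R]_5) (x : 'rV[R]_5), W x ->
    {for x, continuous (iterD vs f)} /\ (forall v, derivable (iterD vs f) x v).

(* closure of Omega_{u0} = {t >= 0} /\ {u < u0} in the (u,R) plane (times S^2),
   including scri^+ = {R = 0}. Exterior: r = 1/R > M. *)
Definition clOmega M (u0 : R) : set (R * R) :=
  [set p | p.1 <= u0 /\ 0 <= p.2 < M^-1 /\
           (p.2 = 0 \/ 0 <= p.1 + rstar M p.2^-1)].

Definition smooth_closure M (u0 : R) (phi : 'rV[R]_5 -> R) : Prop :=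
  exists W : set 'rV[R]_5, open W /\
    (forall u x a b c, clOmega M u0 (u, x) -> a ^+ 2 + b ^+ 2 + c ^+ 2 = 1 ->
       W (pt5 u x a b c)) /\
    smooth_on W phi.

(* The value of R on H_{s,u0} above the coordinate u:
   for 0 < s, the unique R in ]0, 1/M[ with u = - s r_*(1/R); for s = 0, R = 0 (scri). *)
Definition Rhyp M s u : R :=
  if s == 0 then 0
  else xget 0 [set x | 0 < x < M^-1 /\ u = - (s * rstar M x^-1)].

(* integral over ]-oo,u0[ x S^2 w.r.t. du d^2omega; S^2 is parametrised by
   spherical angles, d^2omega = sin th dth dph. *)
Definition int_uS2 (u0 : R) (F : R -> R -> R -> R -> R) : \bar R :=
  \int[lebesgue_measure]_(u in `]-oo, u0[%classic)
     \int[lebesgue_measure]_(th in `[0%R, pi%R]%classic)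
       \int[lebesgue_measure]_(ph in `[0%R, (2 * pi)%R]%classic)
         (F u (sin th * cos ph) (sin th * sin ph) (cos th) * sin th)%:E.

(* J_a(phi) n^a = T(K, n) for n tangent to the (u,R)-plane, in terms of
   pu = d_u phi, pR = d_R phi, gs = |grad_{S^2} phi|^2, at the point (u,R). *)
Definition gmet2 M x (X Y : R * R) : R :=
  x ^+ 2 * (1 - M * x) ^+ 2 * X.1 * Y.1 - X.1 * Y.2 - X.2 * Y.1.
Definition flux_density M u x (n : R * R) (pu pR gs : R) : R :=
  let K := (u ^+ 2, - 2 * (1 + u * x)) in
  let Kphi := K.1 * pu + K.2 * pR in
  let nphi := n.1 * pu + n.2 * pR in
  let dphi2 := - 2 * pu * pR - x ^+ 2 * (1 - M * x) ^+ 2 * pR ^+ 2 - gs in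
  Kphi * nphi - 2^-1 * gmet2 M x K n * dphi2.

(* For s = 0 (scri^+ = {R = 0}, a null hypersurface): J_a n^a with the
   future-directed normal n = d/du (= d/dt there), transverse l = - d/dR
   (g(l,n) = 1), so that the induced measure is du d^2omega. *)
Definition Eflux M (u0 : R) s (phi : 'rV[R]_5 -> R) : \bar R :=
  if s == 0 then
    int_uS2 u0 (fun u a b c =>
      let p := pt5 u 0 a b c in
      flux_density M u 0 (1, 0) (d_u phi p) (d_R phi p) (gradS2sq phi p))
  else
    int_uS2 u0 (fun u a b c =>
      let x := Rhyp M s u in
      let p := pt5 u x a b c in
      let pu := d_u phi p in let pR := d_R phi p in let gs := gradS2sq phi p in
      x ^+ 2 * (1 - M * x) ^+ 2 * u ^+ 2 * pu * pR + u ^+ 2 * pu ^+ 2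
      + x ^+ 2 * (1 - M * x) ^+ 2 / (2 * s) *
          ((x * u) ^+ 2 * (1 - M * x) ^+ 2 + 2 * (2 - s) * (x * u) + 2 * (2 - s))
          * pR ^+ 2
      + (x * u + (x * u) ^+ 2 * (1 - M * x) ^+ 2 / (2 * s) + 1) * gs).

Definition Is M (u0 : R) s (phi : 'rV[R]_5 -> R) : \bar R :=
  int_uS2 u0 (fun u a b c =>
    let x := Rhyp M s u in
    let p := pt5 u x a b c in
    u ^+ 2 * (d_u phi p) ^+ 2 + x / `|u| * (d_R phi p) ^+ 2 + gradS2sq phi p).

End ERN.

From HB Require Import structures.
From mathcomp Require Import all_boot all_order all_algebra.
From mathcomp Require Import all_classical all_reals all_analysis.
From mathcomp Require Import ring lra.
Set Implicit Arguments. Unset Strict Implicit. Unset Printing Implicit Defensive.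
Import Order.TTheory GRing.Theory Num.Theory.
Import numFieldNormedType.Exports.
Local Open Scope ring_scope.

(* On H_{s,u0} write x for the coordinate R and put rho := x r_*(1/x), w := 1 - M x,
   so that x u = - s rho.  With A := u^2 and B := x/|u|, the integrand of I_s is
   A (d_u phi)^2 + B (d_R phi)^2 + |grad phi|^2, while the flux integrand is a
   quadratic form in (d_u phi, d_R phi) plus a multiple of |grad phi|^2 whose
   coefficients, relative to A and B, depend only on (s, rho, w).  Since
   r_*(r) = r + O(M log (r/M)), far out (u << -M) rho and w are within 1% of 1,
   and a discriminant estimate then pins the flux form between 1/100 and 100 times
   the I_s form, uniformly in s in ]0,1].  Integrating gives the two-sided bound;
   on scri (x = 0) the two integrands coincide. *)

(* [w] stands for [1 - M * x]: [flux_integrand s (1 - M * x)] is the integrand of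
   [Eflux] on H_{s,u0}. *)
Definition flux_integrand {R : realFieldType} (s w u x pu pR gs : R) : R :=
  x ^+ 2 * w ^+ 2 * u ^+ 2 * pu * pR + u ^+ 2 * pu ^+ 2
  + x ^+ 2 * w ^+ 2 / (2 * s) *
      ((x * u) ^+ 2 * w ^+ 2 + 2 * (2 - s) * (x * u) + 2 * (2 - s)) * pR ^+ 2
  + (x * u + (x * u) ^+ 2 * w ^+ 2 / (2 * s) + 1) * gs.

Definition Is_integrand {R : realFieldType} (u x pu pR gs : R) : R :=
  u ^+ 2 * pu ^+ 2 + x / `|u| * pR ^+ 2 + gs.

Section QuadraticForms.
Variable R : realFieldType.
Implicit Types a b g A B k c C p q : R.

Lemma quadratic_form_ge0 a b g p q : 0 < a -> b ^+ 2 <= 4 * a * g ->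
  0 <= a * p ^+ 2 + b * p * q + g * q ^+ 2.
Proof.
move=> a0 disc.
have sq : 0 <= (2 * a * p + b * q) ^+ 2 by exact: sqr_ge0.
have rest : 0 <= (4 * a * g - b ^+ 2) * q ^+ 2 by rewrite mulr_ge0 ?sqr_ge0 ?subr_ge0.
have : 0 <= 4 * a * (a * p ^+ 2 + b * p * q + g * q ^+ 2) by nra.
by rewrite pmulr_rge0 //; lra.
Qed.

Lemma quadratic_form_lower A B b k c p q : 0 < A -> c < 1 ->
  b ^+ 2 <= 4 * (1 - c) * (k - c) * (A * B) ->
  c * (A * p ^+ 2 + B * q ^+ 2) <= A * p ^+ 2 + b * p * q + k * B * q ^+ 2.
Proof.
move=> A0 c1 disc.
have : 0 <= (1 - c) * A * p ^+ 2 + b * p * q + (k - c) * B * q ^+ 2.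
  by apply: quadratic_form_ge0; [rewrite mulr_gt0 ?subr_gt0 | lra].
lra.
Qed.

Lemma quadratic_form_upper A B b k C p q : 0 < A -> 1 < C ->
  b ^+ 2 <= 4 * (C - 1) * (C - k) * (A * B) ->
  A * p ^+ 2 + b * p * q + k * B * q ^+ 2 <= C * (A * p ^+ 2 + B * q ^+ 2).
Proof.
move=> A0 C1 disc.
have : 0 <= (C - 1) * A * p ^+ 2 + (- b) * p * q + (C - k) * B * q ^+ 2.
  by apply: quadratic_form_ge0; [rewrite mulr_gt0 ?subr_gt0 | rewrite sqrrN; lra].
lra.
Qed.

End QuadraticForms.

Section NormalisedFluxCoefficients.
Variables (R : realFieldType) (s rho w : R).
Hypotheses (s_gt0 : 0 < s) (s_le1 : s <= 1).
Hypotheses (rho_ge : 99/100 <= rho) (rho_le : rho <= 101/100).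
Hypotheses (w_ge : 99/100 <= w) (w_le1 : w <= 1).
Let t := s * rho.

(* Micromega does not see section hypotheses, so they are put in the goal first. *)
Local Ltac base_ranges := move: s_gt0 s_le1 rho_ge rho_le w_ge w_le1 => *.

Definition radial_coeff : R := w ^+ 2 * (t ^+ 2 * w ^+ 2 + 2 * (2 - s) * (1 - t)) * rho / 2.
Definition angular_coeff : R := 1 - t + t * rho * w ^+ 2 / 2.

Let t_ge0 : 0 <= t. Proof. base_ranges; rewrite /t; nra. Qed.
Let t_le : t <= 101/100. Proof. base_ranges; rewrite /t; nra. Qed.
Let w2_ge : 98/100 <= w ^+ 2. Proof. base_ranges; nra. Qed.
Let w2_le1 : w ^+ 2 <= 1. Proof. base_ranges; nra. Qed.
Local Ltac ranges := base_ranges; move: t_ge0 t_le w2_ge w2_le1 => *.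

Lemma angular_coeff_bounds : 1/100 <= angular_coeff <= 100.
Proof.
ranges.
have rw : 485/1000 <= rho * w ^+ 2 / 2 <= 51/100 by apply/andP; split; nra.
have trw : 485/1000 * t <= t * rho * w ^+ 2 / 2 <= 51/100 * t.
  have -> : t * rho * w ^+ 2 / 2 = t * (rho * w ^+ 2 / 2) by ring.
  by case/andP: rw => *; apply/andP; split; nra.
by rewrite /angular_coeff; apply/andP; split; lra.
Qed.

Lemma radial_coeff_lower : w ^+ 4 * t ^+ 3 <= 4 * (1 - 1/100) * (radial_coeff - 1/100).
Proof.
ranges.
have K_ge : 98/100 * t ^+ 2 + 2 * (2 - s) * (1 - t)
    <= t ^+ 2 * w ^+ 2 + 2 * (2 - s) * (1 - t) by nra.
have poly : t ^+ 3 <= 192/100 * (98/100 * t ^+ 2 + 2 * (2 - s) * (1 - t)) - 4/100.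
  have [t1|t1] := lerP t 1.
    have : 0 <= (1 - s) * (1 - t) by nra.
    nra.
  have : 2 * (1 - t) <= (2 - s) * (1 - t) by nra.
  nra.
have w4 : w ^+ 4 * t ^+ 3 <= t ^+ 3.
  have : w ^+ 4 <= 1 by rewrite (_ : w ^+ 4 = w ^+ 2 * w ^+ 2); [nra | ring].
  have : 0 <= t ^+ 3 by rewrite exprn_ge0.
  nra.
have wr : 485/1000 <= w ^+ 2 * rho / 2 by nra.
have K0 : 0 <= t ^+ 2 * w ^+ 2 + 2 * (2 - s) * (1 - t).
  have : 0 <= t ^+ 3 by rewrite exprn_ge0.
  lra.
have : 485/1000 * (t ^+ 2 * w ^+ 2 + 2 * (2 - s) * (1 - t)) <= radial_coeff.
  have -> : radial_coeff = w ^+ 2 * rho / 2 * (t ^+ 2 * w ^+ 2 + 2 * (2 - s) * (1 - t)).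
    by rewrite /radial_coeff; ring.
  exact: ler_wpM2r.
lra.
Qed.

Lemma radial_coeff_upper : w ^+ 4 * t ^+ 3 <= 4 * (100 - 1) * (100 - radial_coeff).
Proof.
ranges.
have K_le : t ^+ 2 * w ^+ 2 + 2 * (2 - s) * (1 - t) <= 6 by nra.
have wr : 0 <= w ^+ 2 * rho / 2 <= 1 by apply/andP; split; nra.
have : radial_coeff <= 6.
  have -> : radial_coeff = w ^+ 2 * rho / 2 * (t ^+ 2 * w ^+ 2 + 2 * (2 - s) * (1 - t)).
    by rewrite /radial_coeff; ring.
  have [Kn|Kp] := lerP (t ^+ 2 * w ^+ 2 + 2 * (2 - s) * (1 - t)) 0; nra.
have : w ^+ 4 * t ^+ 3 <= 2.
  have : w ^+ 4 <= 1 by rewrite (_ : w ^+ 4 = w ^+ 2 * w ^+ 2); [nra | ring].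
  have : t ^+ 3 <= 2 by rewrite (_ : t ^+ 3 = t * t * t); [nra | ring].
  have : 0 <= t ^+ 3 by rewrite exprn_ge0.
  have : 0 <= w ^+ 4 by rewrite exprn_ge0 //; lra.
  nra.
lra.
Qed.

Lemma flux_integrand_normal_bounds (x u pu pR gs : R) :
  0 < x -> 0 <= gs -> x * u = - t ->
  1/100 * Is_integrand u x pu pR gs <= flux_integrand s w u x pu pR gs
                                    <= 100 * Is_integrand u x pu pR gs.
Proof.
move=> x0 gs0 xu; ranges.
have t0 : 0 < t by rewrite mulr_gt0 //; lra.
have [xn tn] : x != 0 /\ t != 0 by rewrite !gt_eqF.
have [sn rhon] : s != 0 /\ rho != 0 by rewrite !gt_eqF //; lra.
have u_def : u = - t / x by rewrite -xu mulrAC divff ?mul1r.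
have abs_u : `|u| = t / x by rewrite u_def mulNr normrN gtr0_norm // divr_gt0.
set A := u ^+ 2; set B := x ^+ 2 / t; set b := w ^+ 2 * t ^+ 2.
have A0 : 0 < A by rewrite /A u_def mulNr sqrrN exprn_gt0 // divr_gt0.
have AB : A * B = t by rewrite /A /B u_def; field; rewrite tn xn.
have disc : b ^+ 2 = (w ^+ 4 * t ^+ 3) * (A * B) by rewrite AB /b; ring.
have eFi : Is_integrand u x pu pR gs = A * pu ^+ 2 + B * pR ^+ 2 + gs.
  by rewrite /Is_integrand abs_u /A /B; field; rewrite ?tn ?xn.
have eGe : flux_integrand s w u x pu pR gs
    = A * pu ^+ 2 + b * pu * pR + radial_coeff * B * pR ^+ 2 + angular_coeff * gs.
  rewrite /flux_integrand /radial_coeff /angular_coeff /A /B /b u_def /t.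
  by field; rewrite rhon sn xn.
have [g_lo g_hi] := andP angular_coeff_bounds.
have AB0 : 0 <= A * B by rewrite AB ltW.
rewrite eFi eGe; apply/andP; split.
- have disc_lo : b ^+ 2 <= 4 * (1 - 1/100) * (radial_coeff - 1/100) * (A * B).
    by rewrite disc; apply: ler_wpM2r => //; exact: radial_coeff_lower.
  have c_lt1 : (1/100 : R) < 1 by lra.
  have := quadratic_form_lower pu pR A0 c_lt1 disc_lo.
  have : 0 <= (angular_coeff - 1/100) * gs by rewrite mulr_ge0 ?subr_ge0.
  lra.
- have disc_hi : b ^+ 2 <= 4 * (100 - 1) * (100 - radial_coeff) * (A * B).
    by rewrite disc; apply: ler_wpM2r => //; exact: radial_coeff_upper.
  have C_gt1 : (1 : R) < 100 by lra.
  have := quadratic_form_upper pu pR A0 C_gt1 disc_hi.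
  have : 0 <= (100 - angular_coeff) * gs by rewrite mulr_ge0 ?subr_ge0.
  lra.
Qed.

End NormalisedFluxCoefficients.

Section TortoiseCoordinate.
Variable R : realType.
Implicit Types M r k s u : R.

Lemma rstar_ge M r : 0 < M -> 2 * M <= r -> r - 2 * M <= rstar M r.
Proof.
move=> M0 r2M; have rM : 0 < r - M by lra.
have ln_ge0 : 0 <= ln ((r - M) / M) by rewrite ln_ge0 // ler_pdivlMr //; lra.
have : M ^+ 2 / (r - M) <= M by rewrite ler_pdivrMr //; nra.
rewrite /rstar; nra.
Qed.

Lemma rstar_le M r k : 0 < M -> M < r -> 0 < k ->
  rstar M r <= (1 + 2 / k) * r + 2 * M * ln k.
Proof.
move=> M0 Mr k0; set z := (r - M) / M.
have z0 : 0 < z by rewrite divr_gt0 // subr_gt0.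
have zk : 0 < z / k by rewrite divr_gt0.
have ln_z : ln z <= ln k + z / k.
  have ez : z = k * (z / k) by rewrite mulrC divfK // gt_eqF.
  by rewrite {1}ez lnM ?posrE // lerD2l ltW // ln_sublinear.
have Mz : 2 * M * (z / k) = 2 / k * (r - M) by rewrite /z; field; rewrite !gt_eqF.
have : 0 <= M ^+ 2 / (r - M) by rewrite divr_ge0 ?sqr_ge0 // subr_ge0 ltW.
have : 0 <= 2 / k * M by rewrite mulr_ge0 ?divr_ge0 ?ltW.
rewrite /rstar -/z; nra.
Qed.

Lemma rstar_ratio_bounds M r : 0 < M -> (400 * 400) * M <= r ->
  99/100 <= rstar M r / r <= 101/100.
Proof.
move=> M0 rbig; have r0 : 0 < r by nra.
have k0 : (0 : R) < 400 by lra.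
have lo : r - 2 * M <= rstar M r by apply: rstar_ge; lra.
have hi : rstar M r <= (1 + 2 / 400) * r + 2 * M * ln 400 by apply: rstar_le; lra.
have ln400 : M * ln 400 <= M * 400 by rewrite ler_pM2l // ltW // ln_sublinear.
by apply/andP; split; [rewrite ler_pdivlMr | rewrite ler_pdivrMr]; lra.
Qed.

Lemma tortoise_root_far M s r u : 0 < M -> 0 < s <= 1 -> M < r ->
  u = - (s * rstar M r) -> u < - ((3 * 400 * 400) * M) -> (400 * 400) * M <= r.
Proof.
move=> M0 /andP[s0 s1] Mr u_def u_lt.
have srs : (3 * 400 * 400) * M < s * rstar M r by lra.
have rs0 : 0 < rstar M r by rewrite -(pmulr_rgt0 _ s0); lra.
have : s * rstar M r <= rstar M r by rewrite ler_piMl // ltW.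
by have := rstar_le M0 Mr ltr01; rewrite ln1 mulr0 addr0; lra.
Qed.

Lemma Rhyp_cases M s u : 0 <= s ->
  Rhyp M s u = 0 \/
  [/\ 0 < s, 0 < Rhyp M s u < M^-1 & u = - (s * rstar M (Rhyp M s u)^-1)].
Proof.
move=> s0; rewrite /Rhyp; have [->|sn0] := eqVneq s 0; first by left.
case: xgetP => [y -> [y_range y_root]|_]; last by left.
by right; split => //; rewrite lt_neqAle eq_sym sn0.
Qed.

End TortoiseCoordinate.

Section ScriAndFluxIntegrands.
Variable R : realType.
Implicit Types M s w u pu pR gs : R.

Lemma flux_density_scri M u pu pR gs :
  flux_density M u 0 (1, 0) pu pR gs = u ^+ 2 * pu ^+ 2 + gs.
Proof. by rewrite /flux_density /gmet2 /=; field. Qed.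

Lemma flux_integrand_scri s w u pu pR gs :
  flux_integrand s w u 0 pu pR gs = u ^+ 2 * pu ^+ 2 + gs.
Proof. by rewrite /flux_integrand; ring. Qed.

Lemma Is_integrand_scri u pu pR gs :
  Is_integrand u 0 pu pR gs = u ^+ 2 * pu ^+ 2 + gs.
Proof. by rewrite /Is_integrand mul0r mul0r addr0. Qed.

End ScriAndFluxIntegrands.

Lemma flux_integrand_bounds (R : realType) (M s u0 u pu pR gs : R) :
  0 < M -> 0 <= s <= 1 -> u < u0 -> u0 < - ((3 * 400 * 400) * M) -> 0 <= gs ->
  let x := Rhyp M s u in
  1/100 * Is_integrand u x pu pR gs <= flux_integrand s (1 - M * x) u x pu pR gs
                                    <= 100 * Is_integrand u x pu pR gs.
Proof.
move=> M0 /andP[s0 s1] u_lt u0_lt gs0 /=.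
have [x0|[s_gt0 x_range u_root]] := Rhyp_cases M u s0.
  (* [Rhyp] is 0 on scri and also when no root exists; either way the
     integrands agree. *)
  rewrite x0 flux_integrand_scri Is_integrand_scri.
  have : 0 <= u ^+ 2 * pu ^+ 2 + gs by rewrite addr_ge0 // mulr_ge0 ?sqr_ge0.
  by move=> F0; apply/andP; split; lra.
set x := Rhyp M s u in x_range u_root *.
have [x_gt0 xM] := andP x_range.
have Mx : M < x^-1 by rewrite -[M]invrK ltf_pV2 ?posrE ?invr_gt0.
have s_range : 0 < s <= 1 by rewrite s_gt0.
have u_big : u < - ((3 * 400 * 400) * M) by lra.
have far := tortoise_root_far M0 s_range Mx u_root u_big.
have /andP[rho_lo rho_hi] := rstar_ratio_bounds M0 far; rewrite invrK in rho_lo rho_hi.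
have Mx_le : (400 * 400) * M * x <= 1.
  by have := ler_wpM2r (ltW x_gt0) far; rewrite mulVf ?gt_eqF.
have Mx_ge0 : 0 <= M * x by rewrite mulr_ge0 // ltW.
apply: (flux_integrand_normal_bounds (rho := rstar M x^-1 * x)); try lra.
by rewrite u_root; ring.
Qed.

Lemma ge0_le_integral_scale d (T : measurableType d) (R : realType)
  (mu : {measure set T -> \bar R}) (D : set T) (f g : T -> \bar R) (c : R) :
  0 < c -> (forall x, D x -> (0 <= f x)%E) -> (forall x, D x -> (c%:E * f x <= g x)%E) ->
  (c%:E * \int[mu]_(x in D) f x <= \int[mu]_(x in D) g x)%E.
Proof.
move=> c0 f0 fg.
(* No measurability is assumed: compare the suprema over simple functions directly. *)
have g0 x : D x -> (0 <= g x)%E.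
  move=> Dx; apply: le_trans (fg x Dx).
  by apply: mule_ge0; [rewrite lee_fin ltW | exact: f0].
rewrite !ge0_integralE // -lee_pdivlMl //.
apply: ge_ereal_sup => _ [h hf <-].
rewrite lee_pdivlMl // -sintegralrM.
apply: ereal_sup_ubound; exists (scale_nnsfun h (ltW c0)) => //= x.
have := hf x; rewrite /patch /=; case: ifPn => [/set_mem Dx|_] hx.
  by rewrite EFinM; apply: le_trans (fg x Dx); rewrite lee_pmul2l.
by rewrite lee_fin; apply: mulr_ge0_le0; [exact: ltW | rewrite -lee_fin].
Qed.

Lemma sphere_param_unit (R : realType) (th ph : R) :
  (sin th * cos ph) ^+ 2 + (sin th * sin ph) ^+ 2 + (cos th) ^+ 2 = 1.
Proof.
rewrite -[RHS](cos2Dsin2 th) -[X in _ = _ + X]mulr1 -(cos2Dsin2 ph); ring.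
Qed.

Lemma int_uS2_scale_le (R : realType) (u0 c : R) (F G : R -> R -> R -> R -> R) :
  0 < c ->
  (forall u a b e, u < u0 -> a ^+ 2 + b ^+ 2 + e ^+ 2 = 1 ->
     0 <= F u a b e /\ c * F u a b e <= G u a b e) ->
  (c%:E * int_uS2 u0 F <= int_uS2 u0 G)%E.
Proof.
move=> c0 FG; rewrite /int_uS2.
have FG_sph u th ph : u < u0 -> 0 <= th <= pi ->
    let F' := F u (sin th * cos ph) (sin th * sin ph) (cos th) * sin th in
    0 <= F' /\ c * F' <= G u (sin th * cos ph) (sin th * sin ph) (cos th) * sin th.
  move=> u_lt th_range F'; have sin0 := sin_ge0_pi th_range.
  have [F0 cFG] := FG u _ _ _ u_lt (sphere_param_unit th ph).
  by split; [exact: mulr_ge0 | rewrite mulrA ler_wpM2r].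
have th_range th : `[0%R, pi%R]%classic th -> 0 <= th <= pi.
  by rewrite /= in_itv.
have u_lt u : `]-oo, u0[%classic u -> u < u0.
  by rewrite /= in_itv.
apply: ge0_le_integral_scale => // u /u_lt u_lt0.
  apply: integral_ge0 => th /th_range th0; apply: integral_ge0 => ph _.
  by rewrite lee_fin; case: (FG_sph u th ph u_lt0 th0).
apply: ge0_le_integral_scale => // th /th_range th0.
  apply: integral_ge0 => ph _.
  by rewrite lee_fin; case: (FG_sph u th ph u_lt0 th0).
apply: ge0_le_integral_scale => // ph _.
  by rewrite lee_fin; case: (FG_sph u th ph u_lt0 th0).
by rewrite -EFinM lee_fin; case: (FG_sph u th ph u_lt0 th0).
Qed.

Lemma gradS2sq_ge0 (R : realType) (phi : 'rV[R]_5 -> R) u x a b e :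
  a ^+ 2 + b ^+ 2 + e ^+ 2 = 1 -> 0 <= gradS2sq phi (pt5 u x a b e).
Proof.
move=> unit; rewrite /gradS2sq /pt5 !mxE !inordK //=.
set g2 := dpart 2 phi _; set g3 := dpart 3 phi _; set g4 := dpart 4 phi _.
(* Lagrange's identity: |n|^2 |g|^2 - (n.g)^2 = |n x g|^2. *)
have -> : g2 ^+ 2 + g3 ^+ 2 + g4 ^+ 2 - (a * g2 + b * g3 + e * g4) ^+ 2 =
    (a * g3 - b * g2) ^+ 2 + (a * g4 - e * g2) ^+ 2 + (b * g4 - e * g3) ^+ 2.
  by rewrite -[X in X - _]mul1r -unit; ring.
by rewrite !addr_ge0 ?sqr_ge0.
Qed.

Lemma Eflux_int_uS2 (R : realType) (M u0 s : R) (phi : 'rV[R]_5 -> R) :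
  Eflux M u0 s phi =
  int_uS2 u0 (fun u a b c =>
    let x := Rhyp M s u in
    let p := pt5 u x a b c in
    flux_integrand s (1 - M * x) u x (d_u phi p) (d_R phi p) (gradS2sq phi p)).
Proof.
rewrite /Eflux; case: eqP => [->|//]; congr int_uS2.
apply/funext => u; apply/funext => a; apply/funext => b; apply/funext => c.
by rewrite /Rhyp eqxx flux_density_scri flux_integrand_scri.
Qed.

Lemma Eflux_scri (R : realType) (M u0 : R) (phi : 'rV[R]_5 -> R) :
  Eflux M u0 0 phi = Is M u0 0 phi.
Proof.
rewrite Eflux_int_uS2 /Is; congr int_uS2.
apply/funext => u; apply/funext => a; apply/funext => b; apply/funext => c.
by rewrite /Rhyp eqxx flux_integrand_scri /= !(mul0r, addr0).
Qed.

Lemma Is_scri (R : realType) (M u0 : R) (phi : 'rV[R]_5 -> R) :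
  Is M u0 0 phi = int_uS2 u0 (fun u a b c =>
    let p := pt5 u 0 a b c in u ^+ 2 * (d_u phi p) ^+ 2 + gradS2sq phi p).
Proof.
rewrite /Is; congr int_uS2.
apply/funext => u; apply/funext => a; apply/funext => b; apply/funext => c.
by rewrite /Rhyp eqxx -[LHS]/(Is_integrand _ _ _ _ _) Is_integrand_scri.
Qed.

Theorem proposition1 (R : realType) (M : R) (hM : 0 < M) :
  exists U c C : R, U < 0 /\ 0 < c /\ c <= C /\
    forall (u0 s : R) (phi : 'rV[R]_5 -> R),
      u0 < U -> 0 <= s <= 1 -> smooth_closure M u0 phi ->
      ((c%:E * Is M u0 s phi <= Eflux M u0 s phi)%E /\
       (Eflux M u0 s phi <= C%:E * Is M u0 s phi)%E /\
       (s = 0 ->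
          Eflux M u0 s phi = Is M u0 s phi /\
          Eflux M u0 s phi =
            int_uS2 u0 (fun u a b c =>
              let p := pt5 u 0 a b c in
              u ^+ 2 * (d_u phi p) ^+ 2 + gradS2sq phi p))).
Proof.
exists (- ((3 * 400 * 400) * M)), (1/100), 100.
do 3 (split; first lra).
move=> u0 s phi u0_lt s_range _.
have sandwich u a b e : u < u0 -> a ^+ 2 + b ^+ 2 + e ^+ 2 = 1 ->
    let x := Rhyp M s u in let p := pt5 u x a b e in
    let F := Is_integrand u x (d_u phi p) (d_R phi p) (gradS2sq phi p) in
    let G := flux_integrand s (1 - M * x) u x (d_u phi p) (d_R phi p) (gradS2sq phi p) in
    [/\ 0 <= F, 1/100 * F <= G & G <= 100 * F].
  move=> u_lt unit /=.
  have /andP[lo hi] := flux_integrand_bounds (d_u phi (pt5 u (Rhyp M s u) a b e))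
    (d_R phi (pt5 u (Rhyp M s u) a b e)) hM s_range u_lt u0_lt
    (gradS2sq_ge0 phi u (Rhyp M s u) unit).
  by split => //; lra.
split; last split.
- rewrite Eflux_int_uS2; apply: int_uS2_scale_le => [|u a b e u_lt unit]; first lra.
  by case: (sandwich u a b e u_lt unit).
- rewrite Eflux_int_uS2 -lee_pdivrMl; last lra.
  apply: int_uS2_scale_le => [|u a b e u_lt unit /=]; first by rewrite invr_gt0.
  have [F0 FG GF] := sandwich u a b e u_lt unit.
  by split; [lra | rewrite ler_pdivrMl].
- by move=> s0; rewrite s0 Eflux_scri Is_scri.
Qed.
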